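(* Let $I(x,y)=U(N(x),y)$ where $U$ is a disjunctive uninorm with neutral element $e\in\,]0,1[$ and $N$ is a continuous fuzzy negation. Then the pairs $(U^*,N^* )$, with $U^*$ a disjunctive uninorm with neutral element in $]0,1[$ and $N^*$ a continuous fuzzy negation, satisfying $I(x,y)=U^*(N^*(x),y)$ for all $x,y$, are exactly the pairs $$N^*=N_I^{\alpha},\qquad U^*(x,y)=I(\mathfrak{R}_{N_I^{\alpha}}(x),y)\quad(x,y\in[0,1]),$$ where $\alpha\in\,]0,1[$ is such that the horizontal cut $N_I^\alpha=I(\cdot,\alpha)$ is a continuous fuzzy negation (and then $\alpha$ is the neutral element of $U^*$). In particular $\alpha=e$ fulfills this condition, and the representation of $I$ is unique if and only if $I(\cdot,e)$ is the only horizontal cut $I(\cdot,\alpha)$, $\alpha\in\,]0,1[$, which is a continuous fuzzy negation.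
   Context: A fuzzy negation is a non-increasing map $N:[0,1]\to[0,1]$ with $N(0)=1$, $N(1)=0$. A uninorm is a map $U:[0,1]^2\to[0,1]$ that is commutative, associative, non-decreasing in each variable, and has a neutral element $e\in[0,1]$. A uninorm is disjunctive if $U(1,0)=1$. For $\alpha\in[0,1[$, $N_I^\alpha(x)=I(x,\alpha)$. For a fuzzy negation $M$, the modified pseudo-inverse is $\mathfrak{R}_M(0)=1$ and $\mathfrak{R}_M(x)=\sup\{y\in[0,1]: M(y)>x\}$ for $x\in\,]0,1]$. *)

From Stdlib Require Import Reals.
From Coquelicot Require Import Coquelicot.
Open Scope R_scope.

(* Functions are R -> R (resp. R -> R -> R); only their values on [0,1]
   (resp. [0,1]^2) are relevant. *)
Definition in01 (x : R) : Prop := 0 <= x <= 1.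

Definition fuzzy_negation (N : R -> R) : Prop :=
  (forall x, in01 x -> in01 (N x)) /\
  (forall x y, in01 x -> in01 y -> x <= y -> N y <= N x) /\
  N 0 = 1 /\ N 1 = 0.

Definition continuous01 (N : R -> R) : Prop :=
  forall x, in01 x -> forall eps, 0 < eps -> exists delta, 0 < delta /\
    forall y, in01 y -> Rabs (y - x) < delta -> Rabs (N y - N x) < eps.

Definition cont_fuzzy_negation (N : R -> R) : Prop :=
  fuzzy_negation N /\ continuous01 N.

Definition uninorm (U : R -> R -> R) (e : R) : Prop :=
  in01 e /\
  (forall x y, in01 x -> in01 y -> in01 (U x y)) /\
  (forall x y, in01 x -> in01 y -> U x y = U y x) /\
  (forall x y z, in01 x -> in01 y -> in01 z -> U x (U y z) = U (U x y) z) /\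
  (forall x x' y, in01 x -> in01 x' -> in01 y -> x <= x' -> U x y <= U x' y) /\
  (forall x y y', in01 x -> in01 y -> in01 y' -> y <= y' -> U x y <= U x y') /\
  (forall x, in01 x -> U e x = x).

Definition disjunctive (U : R -> R -> R) : Prop := U 1 0 = 1.

Definition hcut (I : R -> R -> R) (alpha : R) : R -> R := fun x => I x alpha.

(* modified pseudo-inverse: R_M(0) = 1, R_M(x) = sup {y in [0,1] | M y > x}
   for x in ]0,1]; an empty set gives 0 (real m_infty = 0). *)
Definition mod_pseudo_inv (M : R -> R) (x : R) : R :=
  if Req_EM_T x 0 then 1
  else real (Lub_Rbar (fun y => 0 <= y <= 1 /\ x < M y)).

Definition represents (I : R -> R -> R) (U' : R -> R -> R) (N' : R -> R) : Prop :=
  forall x y, in01 x -> in01 y -> I x y = U' (N' x) y.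

Definition admissible_pair (U' : R -> R -> R) (e' : R) (N' : R -> R) : Prop :=
  0 < e' < 1 /\ uninorm U' e' /\ disjunctive U' /\ cont_fuzzy_negation N'.

From Stdlib Require Import Reals Lra.
From Coquelicot Require Import Coquelicot.
Open Scope R_scope.

(* If I(x,y) = U'(N'(x),y), then the horizontal cut of I at the neutral element e'
   of U' is N' itself, so N' is forced and U' is recovered on [0,1] through the
   modified pseudo-inverse, which is a right inverse of any continuous fuzzy
   negation.  Conversely, if the cut M = I(.,alpha) is a continuous negation,
   put phi = N o R_M: then U(phi x, alpha) = x, and since U(t, alpha) = e for
   t = phi e, the whole row U(a,.) is determined by U(a, alpha); this transports
   commutativity, associativity, monotonicity and neutrality of U to
   U*(x,y) = U(phi x, y), with neutral element alpha.  Two representations have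
   equal uninorms, hence equal neutral elements, which gives the uniqueness
   criterion. *)

Lemma cont_fuzzy_negation_ext (F G : R -> R) :
  cont_fuzzy_negation G -> (forall x, in01 x -> F x = G x) ->
  cont_fuzzy_negation F.
Proof.
  intros [[G01 [Gmono [G0 G1]]] Gcont] FG.
  assert (in01_0 : in01 0) by (unfold in01; lra).
  assert (in01_1 : in01 1) by (unfold in01; lra).
  split; [split; [|split; [|split]]|].
  - intros x hx. rewrite FG by exact hx. auto.
  - intros x y hx hy hxy. rewrite !FG by assumption. auto.
  - rewrite FG by exact in01_0. exact G0.
  - rewrite FG by exact in01_1. exact G1.
  - intros x hx eps heps. destruct (Gcont x hx eps heps) as [d [hd Hd]].
    exists d. split; [exact hd|].
    intros y hy hyx. rewrite !FG by assumption. auto.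
Qed.

Section ModPseudoInverse.

Variable M : R -> R.
Hypothesis HM : cont_fuzzy_negation M.

Definition upper_level_set (x : R) : R -> Prop := fun y => 0 <= y <= 1 /\ x < M y.

Lemma upper_level_set_lub (x : R) : 0 < x < 1 ->
  exists s, Lub_Rbar (upper_level_set x) = Finite s /\ in01 s.
Proof.
  intros hx. destruct HM as [[_ [_ [M0 _]]] _].
  destruct (Lub_Rbar_correct (upper_level_set x)) as [ub lub].
  assert (zero_in : upper_level_set x 0) by (unfold upper_level_set; rewrite M0; lra).
  assert (le1 : Rbar_le (Lub_Rbar (upper_level_set x)) 1).
  { apply lub. intros y [hy _]. simpl. lra. }
  assert (ge0 := ub 0 zero_in).
  destruct (Lub_Rbar (upper_level_set x)) as [s| |]; simpl in le1, ge0; try contradiction.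
  exists s. split; [reflexivity | unfold in01; lra].
Qed.

Section LevelSup.

Variables (x s : R).
Hypothesis hx : 0 < x < 1.
Hypothesis hs : in01 s.
Hypothesis s_lub : is_lub_Rbar (upper_level_set x) s.

(* Left continuity at s: otherwise s - delta would already bound the level set. *)
Lemma level_sup_ge : x <= M s.
Proof.
  destruct HM as [_ Mcont]. destruct s_lub as [ub lub].
  apply Rnot_lt_le. intros Ms_lt.
  destruct (Mcont s hs (x - M s)) as [d [hd Hd]]; [lra|].
  assert (bound : Rbar_le s (s - d)).
  { apply lub. intros y Ey. simpl.
    destruct (Rle_dec y (s - d)) as [h|h]; [exact h|exfalso].
    assert (ys := ub y Ey). simpl in ys.
    destruct Ey as [hy01 hMy].
    assert (close : Rabs (y - s) < d) by (apply Rabs_def1; lra).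
    specialize (Hd y hy01 close). apply Rabs_def2 in Hd. lra. }
  simpl in bound. lra.
Qed.

(* Right continuity at s: otherwise points slightly above s lie in the level set. *)
Lemma level_sup_le : M s <= x.
Proof.
  destruct HM as [[_ [_ [_ M1]]] Mcont]. destruct s_lub as [ub _].
  apply Rnot_lt_le. intros Ms_gt.
  assert (s_lt_1 : s < 1).
  { destruct (Req_dec s 1) as [->|h]; [rewrite M1 in Ms_gt; lra | unfold in01 in hs; lra]. }
  destruct (Mcont s hs (M s - x)) as [d [hd Hd]]; [lra|].
  set (y := Rmin (s + d / 2) 1).
  assert (y_le : y <= s + d / 2 /\ y <= 1) by (split; [apply Rmin_l | apply Rmin_r]).
  assert (y_gt : s < y) by (unfold y; apply Rmin_case; lra).
  assert (hy01 : in01 y) by (unfold in01 in *; lra).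
  assert (close : Rabs (y - s) < d) by (apply Rabs_def1; lra).
  specialize (Hd y hy01 close). apply Rabs_def2 in Hd.
  assert (Ey : upper_level_set x y) by (split; [exact hy01 | lra]).
  assert (ys := ub y Ey). simpl in ys. lra.
Qed.

End LevelSup.

Lemma mod_pseudo_inv_spec (x : R) : in01 x ->
  in01 (mod_pseudo_inv M x) /\ M (mod_pseudo_inv M x) = x.
Proof.
  intros hx. pose proof HM as [[M01 [_ [M0 M1]]] _].
  unfold mod_pseudo_inv. destruct (Req_EM_T x 0) as [->|hx0].
  { split; [unfold in01; lra | exact M1]. }
  fold (upper_level_set x).
  destruct (Req_dec x 1) as [->|hx1].
  - assert (empty : Lub_Rbar (upper_level_set 1) = m_infty).
    { apply is_lub_Rbar_unique. split.
      - intros y [hy hMy]. exfalso.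
        assert (h := M01 y hy). unfold in01 in h. lra.
      - intros l _. destruct l; simpl; trivial. }
    rewrite empty. simpl. split; [unfold in01; lra | exact M0].
  - assert (hx' : 0 < x < 1) by (unfold in01 in hx; lra).
    destruct (upper_level_set_lub x hx') as [s [Hs hs]].
    assert (s_lub : is_lub_Rbar (upper_level_set x) s)
      by (rewrite <- Hs; apply Lub_Rbar_correct).
    rewrite Hs. simpl. split; [exact hs|].
    apply Rle_antisym; [apply (level_sup_le x) | apply (level_sup_ge x)]; assumption.
Qed.

End ModPseudoInverse.

Lemma uninorm_neutral_unique (U1 U2 : R -> R -> R) (e1 e2 : R) :
  uninorm U1 e1 -> uninorm U2 e2 ->
  (forall x y, in01 x -> in01 y -> U1 x y = U2 x y) -> e1 = e2.
Proof.
  intros [he1 [_ [comm1 [_ [_ [_ neutral1]]]]]] [he2 [_ [_ [_ [_ [_ neutral2]]]]]] U12.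
  rewrite <- (neutral1 e2 he2), comm1, U12, neutral2 by assumption. reflexivity.
Qed.

Section CutSection.

Variables (U : R -> R -> R) (e alpha : R) (phi : R -> R).
Hypothesis HU : uninorm U e.
Hypothesis halpha : in01 alpha.
Hypothesis phi_in01 : forall x, in01 x -> in01 (phi x).
Hypothesis phi_section : forall x, in01 x -> U (phi x) alpha = x.

(* U(a, y) = U(U(a, alpha), U(phi e, y)) because U(phi e, alpha) = e. *)
Lemma row_determined_by_cut (a b : R) : in01 a -> in01 b ->
  U a alpha = U b alpha -> forall y, in01 y -> U a y = U b y.
Proof.
  destruct HU as [he [U01 [comm [assoc [_ [_ neutral]]]]]].
  assert (through_cut : forall c y, in01 c -> in01 y ->
            U c y = U (U c alpha) (U (phi e) y)).
  { intros c y hc hy.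
    rewrite <- (neutral y hy) at 1. rewrite <- (phi_section e he) at 1.
    rewrite (comm (phi e) alpha), <- (assoc alpha (phi e) y), (assoc c alpha)
      by auto.
    reflexivity. }
  intros ha hb hab y hy. rewrite (through_cut a y), (through_cut b y), hab by auto.
  reflexivity.
Qed.

Lemma row_through_section (a y : R) : in01 a -> in01 y ->
  U a y = U (phi (U a alpha)) y.
Proof.
  destruct HU as [_ [U01 _]]. intros ha hy.
  apply row_determined_by_cut; auto. rewrite phi_section by auto. reflexivity.
Qed.

Lemma section_uninorm : uninorm (fun x y => U (phi x) y) alpha.
Proof.
  destruct HU as [he [U01 [comm [assoc [mono_l [mono_r neutral]]]]]].
  split; [exact halpha | split; [|split; [|split; [|split; [|split]]]]].
  - intros x y hx hy. auto.
  - intros x y hx hy.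
    rewrite <- (phi_section y hy) at 1.
    rewrite assoc, (comm (phi x)), <- assoc, phi_section by auto.
    reflexivity.
  - intros x y z hx hy hz.
    rewrite assoc by auto. symmetry. apply row_determined_by_cut; auto.
    rewrite <- assoc, !phi_section by auto. reflexivity.
  - intros x x' y hx hx' hy hxx'.
    apply mono_l; auto.
    destruct (Rle_lt_dec (phi x) (phi x')) as [h|h]; [exact h|].
    destruct (Req_dec x x') as [<-|hne]; [lra|].
    assert (cut_le : U (phi x') alpha <= U (phi x) alpha) by (apply mono_l; auto; lra).
    rewrite !phi_section in cut_le by auto. lra.
  - intros x y y' hx hy hy' hyy'. auto.
  - intros x hx. rewrite (row_determined_by_cut (phi alpha) e); auto.
    rewrite phi_section, neutral by auto. reflexivity.
Qed.

Lemma section_disjunctive : disjunctive U -> disjunctive (fun x y => U (phi x) y).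
Proof.
  destruct HU as [_ [U01 [_ [_ [_ [mono_r _]]]]]].
  unfold disjunctive. intros U10.
  assert (in01_0 : in01 0) by (unfold in01; lra).
  assert (in01_1 : in01 1) by (unfold in01; lra).
  assert (U1alpha : U 1 alpha = 1).
  { assert (U 1 0 <= U 1 alpha) by (apply mono_r; auto; apply halpha).
    assert (h := U01 1 alpha in01_1 halpha). unfold in01 in h. lra. }
  rewrite (row_determined_by_cut (phi 1) 1), U10 by (rewrite ?phi_section; auto).
  reflexivity.
Qed.

End CutSection.

Lemma represents_cut_at_neutral (I U' : R -> R -> R) (e' : R) (N' : R -> R) :
  uninorm U' e' -> cont_fuzzy_negation N' -> represents I U' N' ->
  cont_fuzzy_negation (hcut I e') /\
  (forall x, in01 x -> N' x = hcut I e' x) /\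
  (forall x y, in01 x -> in01 y -> U' x y = I (mod_pseudo_inv (hcut I e') x) y).
Proof.
  intros [he [_ [comm [_ [_ [_ neutral]]]]]] HN HI.
  assert (N'01 : forall x, in01 x -> in01 (N' x)) by apply HN.
  assert (cut_N' : forall x, in01 x -> hcut I e' x = N' x).
  { intros x hx. unfold hcut. rewrite HI, comm, neutral by auto. reflexivity. }
  assert (Hcut : cont_fuzzy_negation (hcut I e'))
    by exact (cont_fuzzy_negation_ext _ N' HN cut_N').
  split; [exact Hcut | split].
  - intros x hx. symmetry. auto.
  - intros x y hx hy. destruct (mod_pseudo_inv_spec _ Hcut x hx) as [h01 hinv].
    rewrite HI, <- cut_N', hinv by auto. reflexivity.
Qed.

Lemma represents_by_cut (U : R -> R -> R) (e : R) (N : R -> R) (alpha : R) :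
  uninorm U e -> disjunctive U -> (forall x, in01 x -> in01 (N x)) ->
  0 < alpha < 1 ->
  let I := fun x y => U (N x) y in
  cont_fuzzy_negation (hcut I alpha) ->
  admissible_pair (fun x y => I (mod_pseudo_inv (hcut I alpha) x) y) alpha (hcut I alpha) /\
  represents I (fun x y => I (mod_pseudo_inv (hcut I alpha) x) y) (hcut I alpha).
Proof.
  intros HU Hd N01 halpha I Hcut.
  assert (halpha01 : in01 alpha) by (unfold in01; lra).
  set (phi := fun x => N (mod_pseudo_inv (hcut I alpha) x)).
  assert (phi_in01 : forall x, in01 x -> in01 (phi x))
    by (intros x hx; apply N01, (mod_pseudo_inv_spec _ Hcut x hx)).
  assert (phi_section : forall x, in01 x -> U (phi x) alpha = x)
    by (intros x hx; apply (mod_pseudo_inv_spec _ Hcut x hx)).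
  split; [split; [exact halpha | split; [|split; [|exact Hcut]]]|].
  - exact (section_uninorm U e alpha phi HU halpha01 phi_in01 phi_section).
  - exact (section_disjunctive U e alpha phi HU halpha01 phi_in01 phi_section Hd).
  - intros x y hx hy.
    exact (row_through_section U e alpha phi HU halpha01 phi_in01 phi_section
             (N x) y (N01 x hx) hy).
Qed.

Theorem mainTheorem5 (U : R -> R -> R) (e : R) (N : R -> R) :
  0 < e < 1 -> uninorm U e -> disjunctive U -> cont_fuzzy_negation N ->
  let I := fun x y => U (N x) y in
  (forall (U' : R -> R -> R) (e' : R) (N' : R -> R),
     admissible_pair U' e' N' -> represents I U' N' ->
     cont_fuzzy_negation (hcut I e') /\
     (forall x, in01 x -> N' x = hcut I e' x) /\
     (forall x y, in01 x -> in01 y ->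
        U' x y = I (mod_pseudo_inv (hcut I e') x) y)) /\
  (forall alpha, 0 < alpha < 1 -> cont_fuzzy_negation (hcut I alpha) ->
     admissible_pair (fun x y => I (mod_pseudo_inv (hcut I alpha) x) y) alpha
                     (hcut I alpha) /\
     represents I (fun x y => I (mod_pseudo_inv (hcut I alpha) x) y) (hcut I alpha)) /\
  cont_fuzzy_negation (hcut I e) /\
  ((forall (U1 : R -> R -> R) (e1 : R) (N1 : R -> R)
           (U2 : R -> R -> R) (e2 : R) (N2 : R -> R),
      admissible_pair U1 e1 N1 -> represents I U1 N1 ->
      admissible_pair U2 e2 N2 -> represents I U2 N2 ->
      (forall x, in01 x -> N1 x = N2 x) /\
      (forall x y, in01 x -> in01 y -> U1 x y = U2 x y))
   <->
   (forall alpha, 0 < alpha < 1 -> cont_fuzzy_negation (hcut I alpha) -> alpha = e)).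
Proof.
  intros he HU Hd HN I.
  assert (N01 : forall x, in01 x -> in01 (N x)) by apply HN.
  assert (from_pair := fun U' e' N' (A : admissible_pair U' e' N') =>
            represents_cut_at_neutral I U' e' N' (proj1 (proj2 A)) (proj2 (proj2 (proj2 A)))).
  assert (Hcut_e : cont_fuzzy_negation (hcut I e))
    by exact (proj1 (represents_cut_at_neutral I U e N HU HN (fun x y _ _ => eq_refl))).
  assert (by_cut := fun alpha => represents_by_cut U e N alpha HU Hd N01).
  split; [exact from_pair | split; [exact by_cut | split; [exact Hcut_e | split]]].
  - intros unique alpha halpha Hcut.
    destruct (by_cut alpha halpha Hcut) as [A_alpha R_alpha].
    destruct (by_cut e he Hcut_e) as [A_e R_e].
    destruct (unique _ _ _ _ _ _ A_alpha R_alpha A_e R_e) as [_ same_U].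
    exact (uninorm_neutral_unique _ _ _ _ (proj1 (proj2 A_alpha)) (proj1 (proj2 A_e)) same_U).
  - intros cut_neutral U1 e1 N1 U2 e2 N2 A1 R1 A2 R2.
    destruct (from_pair U1 e1 N1 A1 R1) as [C1 [EN1 EU1]].
    destruct (from_pair U2 e2 N2 A2 R2) as [C2 [EN2 EU2]].
    rewrite (cut_neutral e1 (proj1 A1) C1) in EN1, EU1.
    rewrite (cut_neutral e2 (proj1 A2) C2) in EN2, EU2.
    split; intros; rewrite ?EN1, ?EN2, ?EU1, ?EU2 by assumption; reflexivity.
Qed.
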